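(* Let $\rho>0$, $c>0$, $l>0$, $h_0>0$, $k_0>0$, $\beta>0$, $T_f\in\mathbb{R}$ and $T_\infty<T_f$ be constants, and let $k(T)=k_0\left(1+\beta\frac{T-T_\infty}{T_f-T_\infty}\right)$. Put $\alpha_0=\frac{k_0}{\rho c}$, $\mathrm{Ste}_\infty=\frac{c(T_f-T_\infty)}{l}$, $\mathrm{Bi}=\frac{h_0\sqrt{\alpha_0}}{k_0}$ and $\gamma=2\,\mathrm{Bi}$. Consider the Stefan problem of finding $T(x,t)$ and $s(t)$ such that \begin{align*} &\rho c\, T_t(x,t)=(k(T(x,t))T_x(x,t))_x, && 0<x<s(t),\ t>0,\\ &s(0)=0,&&\\ &T(s(t),t)=T_f, && t>0,\\ &k(T_f)T_x(s(t),t)=\rho l\,\dot s(t), && t>0,\\ &k(T(0,t))T_x(0,t)=\frac{h_0}{\sqrt t}\,(T(0,t)-T_\infty), && t>0. \end{align*} Then this problem has the solution $$T(x,t)=(T_f-T_\infty)\,\varphi\!\left(\frac{x}{2\sqrt{\alpha_0 t}}\right)+T_\infty\quad(0<x<s(t),\ t>0),\qquad s(t)=2\lambda\sqrt{\alpha_0 t}\quad(t>0),$$ with a function $\varphi$ and a parameter $\lambda>0$, if and only if $\varphi$ and $\lambda$ satisfy \begin{align*} &[(1+\beta y(\eta))y'(\eta)]'+2\eta y'(\eta)=0, && 0<\eta<\lambda,\\ &y'(0)+\beta y(0)y'(0)-\gamma y(0)=0,&&\\ &y(\lambda)=1,&& \end{align*} (with $y=\varphi$) together with the condition $$\frac{\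varphi'(\lambda)}{\lambda}=\frac{2}{(1+\beta)\,\mathrm{Ste}_\infty}.$$
   Context: $T$ is the temperature of the solid region $0<x<s(t)$ and $s$ is the free boundary; $\mathrm{Ste}_\infty$ is the Stefan number and $\mathrm{Bi}$ the generalized Biot number. *)

From Stdlib Require Import Reals.
From Coquelicot Require Import Coquelicot.
Open Scope R_scope.

Definition kcond (k0 beta Tf Tinf T : R) : R :=
  k0 * (1 + beta * ((T - Tinf) / (Tf - Tinf))).

Definition alpha0 (rho c k0 : R) : R := k0 / (rho * c).
Definition Ste_inf (c l Tf Tinf : R) : R := c * (Tf - Tinf) / l.
Definition Bi (rho c h0 k0 : R) : R := h0 * sqrt (alpha0 rho c k0) / k0.

Definition stefan_solution (rho c l h0 k0 beta Tf Tinf : R)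
    (T : R -> R -> R) (s : R -> R) : Prop :=
  let k := kcond k0 beta Tf Tinf in
  (forall x t, 0 < t -> 0 < x < s t ->
     ex_derive (fun xi => T xi t) x /\
     exists Tt, is_derive (fun tau => T x tau) t Tt /\
       is_derive (fun xi => k (T xi t) * Derive (fun xi' => T xi' t) xi) x
                 (rho * c * Tt))
  /\ s 0 = 0
  /\ (forall t, 0 < t -> T (s t) t = Tf)
  /\ (forall t, 0 < t ->
        ex_derive (fun xi => T xi t) (s t) /\ ex_derive s t /\
        k Tf * Derive (fun xi => T xi t) (s t) = rho * l * Derive s t)
  /\ (forall t, 0 < t ->
        ex_derive (fun xi => T xi t) 0 /\
        k (T 0 t) * Derive (fun xi => T xi t) 0 = h0 / sqrt t * (T 0 t - Tinf)).

Definition ode_problem (beta gamma : R) (y : R -> R) (lam : R) : Prop :=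
  (forall eta, 0 < eta < lam ->
     is_derive (fun e => (1 + beta * y e) * Derive y e) eta
               (- (2 * eta * Derive y eta)))
  /\ Derive y 0 + beta * y 0 * Derive y 0 - gamma * y 0 = 0
  /\ y lam = 1.

From Stdlib Require Import Reals Lra Psatz.
From Coquelicot Require Import Coquelicot.
Open Scope R_scope.

(* Write q = 2 sqrt(alpha0 t) and eta = x / q.  For the ansatz
   T = (Tf - Tinf) phi(eta) + Tinf the flux is
   k(T) T_x = (k0 (Tf - Tinf) / q) (1 + beta phi(eta)) phi'(eta), and
   rho c T_t = - rho c (Tf - Tinf) phi'(eta) eta / (2 t); since rho c q^2 = 4 k0 t,
   the heat equation at (x, t) is exactly the ODE at eta.  The conditions at x = 0
   and at the front x = s(t) = lam q become, after division by a nonzero factor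
   depending on t, the conditions at eta = 0 and eta = lam.  So each condition holds
   for all t > 0 iff it holds at t = 1 iff the corresponding condition on phi holds. *)

Lemma forall_pos_iff (P : R -> Prop) (Q : Prop) :
  (forall t, 0 < t -> (P t <-> Q)) -> ((forall t, 0 < t -> P t) <-> Q).
Proof.
  intros HPQ; split.
  - intros HP. apply (HPQ 1); [lra | apply HP; lra].
  - intros HQ t ht. apply (HPQ t ht), HQ.
Qed.

Lemma and_iff_of_l (A B C : Prop) : A -> (B <-> C) -> (A /\ B <-> C).
Proof. tauto. Qed.

Lemma Req_iff_of_sub_mult (u v u' v' K : R) :
  K <> 0 -> u - v = K * (u' - v') -> (u = v <-> u' = v').
Proof.
  intros hK Hsub; split; intros E.
  - rewrite E, Rminus_diag in Hsub.
    destruct (Rmult_integral _ _ (eq_sym Hsub)) as [H | H]; [contradiction | lra].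
  - rewrite E, Rminus_diag, Rmult_0_r in Hsub. lra.
Qed.

Lemma is_derive_scal_comp_div_iff (g : R -> R) (C q x v : R) : C <> 0 -> q <> 0 ->
  is_derive (fun xi => C * g (xi / q)) x v <-> is_derive g (x / q) (v * q / C).
Proof.
  intros hC hq; split; intros Hg.
  - apply is_derive_ext with (fun e => / C * (C * g (e * q / q))).
    { intros e; simpl. assert (Ee : e * q / q = e :> R) by (field; auto).
      rewrite Ee. field; auto. }
    replace (v * q / C) with (/ C * (q * v)) by (field; auto).
    apply is_derive_scal.
    apply (is_derive_comp (fun xi => C * g (xi / q)) (fun e => e * q)).
    + replace (x / q * q) with x by (field; auto). exact Hg.
    + auto_derive; [easy | ring].
  - replace v with (C * (/ q * (v * q / C))) by (field; auto).
    apply is_derive_scal.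
    apply (is_derive_comp g (fun xi => xi / q)); [exact Hg |].
    auto_derive; [auto | field; auto].
Qed.

Section SimilarityProfile.

Variables (phi : R -> R) (D Tinf : R).
Hypothesis hphi : forall e, ex_derive phi e.

Lemma is_derive_profile_space (q x : R) : q <> 0 ->
  is_derive (fun xi : R => D * phi (xi / q) + Tinf) x (D * Derive phi (x / q) / q).
Proof.
  intros hq. auto_derive; [auto |].
  change (fun e => phi e) with phi. unfold Rdiv. field; auto.
Qed.

Lemma is_derive_profile_time (a t x : R) : 0 < a -> 0 < t ->
  is_derive (fun tau : R => D * phi (x / (2 * sqrt (a * tau))) + Tinf) t
    (D * Derive phi (x / (2 * sqrt (a * t))) * (- (x / (2 * sqrt (a * t))) / (2 * t))).
Proof.
  intros ha ht.
  assert (hS : 0 < sqrt (a * t)) by (apply sqrt_lt_R0; nra).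
  assert (hS2 : sqrt (a * t) * sqrt (a * t) = a * t) by (apply sqrt_sqrt; nra).
  auto_derive; [repeat split; auto; nra |].
  change (fun e => phi e) with phi.
  replace (a * 1) with (sqrt (a * t) * sqrt (a * t) / t) by (rewrite hS2; field; lra).
  unfold Rdiv. field; lra.
Qed.

End SimilarityProfile.

Lemma is_derive_front (lam a t : R) : 0 < a -> 0 < t ->
  is_derive (fun tau : R => 2 * lam * sqrt (a * tau)) t (lam * a / sqrt (a * t)).
Proof.
  intros ha ht.
  assert (hS : 0 < sqrt (a * t)) by (apply sqrt_lt_R0; nra).
  auto_derive; [nra | field; lra].
Qed.

Lemma front_at_zero (lam a : R) : 2 * lam * sqrt (a * 0) = 0.
Proof. rewrite Rmult_0_r, sqrt_0; ring. Qed.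

Section SimilaritySolution.

Variables (rho c l h0 k0 beta Tf Tinf lam : R) (phi : R -> R).
Hypotheses (hrho : 0 < rho) (hc : 0 < c) (hk0 : 0 < k0) (hT : Tinf < Tf)
  (hl : l <> 0) (hbeta : 1 + beta <> 0) (hlam : lam <> 0)
  (hphi : forall e, ex_derive phi e).

Local Notation a := (alpha0 rho c k0).
Local Notation temp x t := ((Tf - Tinf) * phi (x / (2 * sqrt (a * t))) + Tinf).
Local Notation front t := (2 * lam * sqrt (a * t)).
Local Notation heat_equation_at x t :=
  (ex_derive (fun xi => temp xi t) x%R /\
   exists Tt, is_derive (fun tau => temp x tau) t%R Tt /\
     is_derive (fun xi => kcond k0 beta Tf Tinf (temp xi t) *
                          Derive (fun xi' => temp xi' t) xi) x%R (rho * c * Tt)).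

Lemma alpha0_pos : 0 < a.
Proof. unfold alpha0. apply Rdiv_lt_0_compat; nra. Qed.

Lemma similarity_scale_pos (t : R) : 0 < t -> 0 < 2 * sqrt (a * t).
Proof.
  intros ht. pose proof alpha0_pos.
  assert (0 < sqrt (a * t)) by (apply sqrt_lt_R0; nra). lra.
Qed.

Lemma front_similarity_eq (t : R) : 0 < t -> front t / (2 * sqrt (a * t)) = lam.
Proof. intros ht. pose proof (similarity_scale_pos t ht). field. lra. Qed.

Lemma flux_temp (q xi : R) : q <> 0 ->
  kcond k0 beta Tf Tinf ((Tf - Tinf) * phi (xi / q) + Tinf) *
    Derive (fun xi' => (Tf - Tinf) * phi (xi' / q) + Tinf) xi
  = k0 * (Tf - Tinf) / q * ((1 + beta * phi (xi / q)) * Derive phi (xi / q)).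
Proof.
  intros hq.
  rewrite (is_derive_unique _ _ _ (is_derive_profile_space phi (Tf - Tinf) Tinf hphi q xi hq)).
  unfold kcond. field. lra.
Qed.

Lemma heat_equation_at_iff (x t : R) : 0 < t ->
  heat_equation_at x t <->
  is_derive (fun e => (1 + beta * phi e) * Derive phi e) (x / (2 * sqrt (a * t)))
    (- (2 * (x / (2 * sqrt (a * t))) * Derive phi (x / (2 * sqrt (a * t))))).
Proof.
  intros ht.
  assert (hq := similarity_scale_pos t ht).
  assert (hq2 : 2 * sqrt (a * t) * (2 * sqrt (a * t)) = 4 * a * t).
  { pose proof alpha0_pos.
    assert (sqrt (a * t) * sqrt (a * t) = a * t) by (apply sqrt_sqrt; nra). nra. }
  set (q := 2 * sqrt (a * t)) in *.
  set (Tt := (Tf - Tinf) * Derive phi (x / q) * (- (x / q) / (2 * t))).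
  assert (HTt : is_derive (fun tau => temp x tau) t Tt)
    by (apply is_derive_profile_time; auto; apply alpha0_pos).
  assert (hC : k0 * (Tf - Tinf) / q <> 0).
  { apply Rgt_not_eq, Rdiv_lt_0_compat; nra. }
  assert (Hrate : rho * c * Tt * q / (k0 * (Tf - Tinf) / q)
                  = - (2 * (x / q) * Derive phi (x / q))).
  { unfold Tt. replace k0 with (q * q / (4 * t) * (rho * c))
      by (rewrite hq2; unfold alpha0; field; lra).
    field. repeat split; lra. }
  rewrite <- Hrate, <- is_derive_scal_comp_div_iff by lra.
  split.
  - intros [_ [Tt' [HTt' Hflux]]].
    replace Tt with Tt'
      by (rewrite <- (is_derive_unique _ _ _ HTt'); exact (is_derive_unique _ _ _ HTt)).
    apply is_derive_ext with (2 := Hflux). intros xi. apply flux_temp. lra.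
  - intros Hflux. split; [eexists; apply is_derive_profile_space; [exact hphi | lra] |].
    exists Tt. split; [exact HTt |].
    apply is_derive_ext with (2 := Hflux). intros xi. symmetry. apply flux_temp. lra.
Qed.

Lemma heat_equation_iff :
  (forall x t, 0 < t -> 0 < x < front t -> heat_equation_at x t) <->
  (forall eta, 0 < eta < lam ->
     is_derive (fun e => (1 + beta * phi e) * Derive phi e) eta (- (2 * eta * Derive phi eta))).
Proof.
  split.
  - intros Hheat eta heta.
    assert (hq := similarity_scale_pos 1 Rlt_0_1).
    replace eta with (eta * (2 * sqrt (a * 1)) / (2 * sqrt (a * 1))) by (field; lra).
    apply heat_equation_at_iff; [lra |].
    apply Hheat; [lra | nra].
  - intros Hode x t ht hx.
    assert (hq := similarity_scale_pos t ht).
    apply heat_equation_at_iff; [exact ht |].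
    apply Hode. split.
    + apply Rdiv_lt_0_compat; lra.
    + apply Rlt_div_l; lra.
Qed.

Lemma front_temperature_iff : (forall t, 0 < t -> temp (front t) t = Tf) <-> phi lam = 1.
Proof.
  apply forall_pos_iff. intros t ht.
  rewrite front_similarity_eq by exact ht.
  apply Req_iff_of_sub_mult with (Tf - Tinf); [lra | ring].
Qed.

Lemma stefan_condition_iff :
  (forall t, 0 < t ->
     ex_derive (fun xi => temp xi t) (front t) /\ ex_derive (fun tau => front tau) t /\
     kcond k0 beta Tf Tinf Tf * Derive (fun xi => temp xi t) (front t)
       = rho * l * Derive (fun tau => front tau) t) <->
  Derive phi lam / lam = 2 / ((1 + beta) * Ste_inf c l Tf Tinf).
Proof.
  apply forall_pos_iff. intros t ht.
  assert (hq := similarity_scale_pos t ht).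
  assert (Hx := is_derive_profile_space phi (Tf - Tinf) Tinf hphi _ (front t) (Rgt_not_eq _ _ hq)).
  assert (Hs := is_derive_front lam _ t alpha0_pos ht).
  apply and_iff_of_l; [eexists; exact Hx |].
  apply and_iff_of_l; [eexists; exact Hs |].
  rewrite (is_derive_unique _ _ _ Hx), (is_derive_unique _ _ _ Hs), front_similarity_eq by exact ht.
  apply Req_iff_of_sub_mult with (k0 * (1 + beta) * (Tf - Tinf) * lam / (2 * sqrt (a * t))).
  - apply Rmult_integral_contrapositive_currified; [| apply Rinv_neq_0_compat; lra].
    repeat apply Rmult_integral_contrapositive_currified; lra.
  - unfold kcond, Ste_inf. set (S := sqrt (a * t)) in *. unfold alpha0.
    field. repeat split; lra.
Qed.

Lemma convective_condition_iff :
  (forall t, 0 < t ->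
     ex_derive (fun xi => temp xi t) 0 /\
     kcond k0 beta Tf Tinf (temp 0 t) * Derive (fun xi => temp xi t) 0
       = h0 / sqrt t * (temp 0 t - Tinf)) <->
  Derive phi 0 + beta * phi 0 * Derive phi 0 - 2 * Bi rho c h0 k0 * phi 0 = 0.
Proof.
  apply forall_pos_iff. intros t ht.
  assert (hq := similarity_scale_pos t ht).
  assert (ha := alpha0_pos).
  assert (hsa : 0 < sqrt a) by (apply sqrt_lt_R0; lra).
  assert (hst : 0 < sqrt t) by (apply sqrt_lt_R0; lra).
  apply and_iff_of_l; [eexists; apply is_derive_profile_space; [exact hphi | lra] |].
  rewrite flux_temp, Rdiv_0_l by lra.
  apply Req_iff_of_sub_mult with (k0 * (Tf - Tinf) / (2 * sqrt (a * t))).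
  - apply Rgt_not_eq, Rdiv_lt_0_compat; nra.
  - unfold Bi. rewrite sqrt_mult by lra. field. repeat split; lra.
Qed.

End SimilaritySolution.

Theorem theorem2p1 (rho c l h0 k0 beta Tf Tinf : R) :
  0 < rho -> 0 < c -> 0 < l -> 0 < h0 -> 0 < k0 -> 0 < beta -> Tinf < Tf ->
  forall (phi : R -> R) (lam : R),
    0 < lam ->
    (forall e, ex_derive phi e) ->
    (stefan_solution rho c l h0 k0 beta Tf Tinf
       (fun x t => (Tf - Tinf) * phi (x / (2 * sqrt (alpha0 rho c k0 * t))) + Tinf)
       (fun t => 2 * lam * sqrt (alpha0 rho c k0 * t))
     <->
     (ode_problem beta (2 * Bi rho c h0 k0) phi lam /\
      Derive phi lam / lam = 2 / ((1 + beta) * Ste_inf c l Tf Tinf))).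
Proof.
  intros hrho hc hl _ hk0 hbeta hT phi lam hlam hphi.
  unfold stefan_solution, ode_problem; cbv beta zeta.
  pose proof (front_at_zero lam (alpha0 rho c k0)).
  rewrite heat_equation_iff, front_temperature_iff, stefan_condition_iff,
    convective_condition_iff by (assumption || lra).
  tauto.
Qed.
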